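(* Assume the setting below, in which $P=\{(x,y):Ax+Gy\le b\}$ is a translated polyhedral cone with apex $(x^*,y^* )$, $x^*\notin\mathbb{Z}^p$, and $cx+hy$ attains its maximum over $P$ uniquely at $(x^*,y^* )$ with value $\gamma^*$. For $r\in R$ define $d^r:=v^r_{1..m}A-v^r_{m+1}c\in\mathbb{Z}^p$ and $\delta^r:=\lfloor v^r_{1..m}b-v^r_{m+1}\gamma^*\rfloor+1\in\mathbb{Z}$. Then for every $x\in\mathbb{Z}^p$ there exists $r\in R$ with $d^rx\ge\delta^r$ (i.e. the inequalities $-d^rx\le-\delta^r$, $r\in R$, form a valid $|R|$-disjunction), and $d^rx^*<\delta^r$ for all $r\in R$ (the disjunction does not contain $x^*$).
   Context: Setting: $A\in\mathbb{Q}^{m\times p}$, $G\in\mathbb{Q}^{m\times q}$, $b\in\mathbb{Q}^m$, $c\in\mathbb{Q}^p$, $h\in\mathbb{Q}^q$ (row vectors), $P=\{(x,y)\in\mathbb{R}^{p+q}:Ax+Gy\le b\}$, $P_I=\mathrm{conv}\{(x,y)\in P:x\in\mathbb{Z}^p\}$. Let $Q=\{v=(v_{1..m},v_{m+1})\in\mathbb{R}^{m+1}: v_{1..m}G-v_{m+1}h=0,\ v\ge0\}$ (with $v_{1..m}$ a row vector in $\mathbb{R}^m$ and $v_{m+1}\in\mathbb{R}$), and let $\{v^r\}_{r\in R}$ ($R$ finite) contain exactly one representative of each extreme ray of $Q$, each scaled (possible since $Q$ is rational) so that $v^r_{1..m}A-v^r_{m+1}c\in\mathbb{Z}^p$. For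 any $\gamma$, the projection onto the $x$-space of $P_\gamma:=P\cap\{cx+hy\ge\gamma\}$ is $\{x: (v^r_{1..m}A-v^r_{m+1}c)x\le v^r_{1..m}b-v^r_{m+1}\gamma\ \forall r\in R\}$. *)

From HB Require Import structures.
From mathcomp Require Import all_boot all_order all_algebra.
Set Implicit Arguments. Unset Strict Implicit. Unset Printing Implicit Defensive.
Import Order.TTheory GRing.Theory Num.Theory.
Local Open Scope ring_scope.

(* Real scalars: an arbitrary archimedean real field R (e.g. the reals);
   the rational data A, G, b, c, h are embedded into R via [ratr]. *)

Section Setting.
Variables (R : archiRealFieldType) (m p q : nat).
Variables (A : 'M[rat]_(m, p)) (G : 'M[rat]_(m, q)) (b : 'cV[rat]_m)
          (c : 'rV[rat]_p) (h : 'rV[rat]_q).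

Definition AR := map_mx (@ratr R) A.
Definition GR := map_mx (@ratr R) G.
Definition bR := map_mx (@ratr R) b.
Definition cR := map_mx (@ratr R) c.
Definition hR := map_mx (@ratr R) h.

Definition inP (x : 'cV[R]_p) (y : 'cV[R]_q) : Prop :=
  forall i : 'I_m, (AR *m x + GR *m y) i 0 <= bR i 0.

Definition obj (x : 'cV[R]_p) (y : 'cV[R]_q) : R := (cR *m x + hR *m y) 0 0.

Definition translated_cone_apex (xs : 'cV[R]_p) (ys : 'cV[R]_q) : Prop :=
  inP xs ys /\
  forall x y (t : R), inP x y -> 0 <= t -> inP (xs + t *: (x - xs)) (ys + t *: (y - ys)).

Definition unique_maximizer (xs : 'cV[R]_p) (ys : 'cV[R]_q) : Prop :=
  inP xs ys /\ forall x y, inP x y -> (x, y) <> (xs, ys) -> obj x y < obj xs ys.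

Definition vhead (v : 'rV[R]_(m + 1)) : 'rV[R]_m := lsubmx v.
Definition vlast (v : 'rV[R]_(m + 1)) : R := rsubmx v 0 0.

Definition inQ (v : 'rV[R]_(m + 1)) : Prop :=
  (forall j, 0 <= v 0 j) /\ vhead v *m GR - vlast v *: hR = 0.

Definition extreme_ray_gen (v : 'rV[R]_(m + 1)) : Prop :=
  inQ v /\ v <> 0 /\
  forall v1 v2, inQ v1 -> inQ v2 -> v = v1 + v2 ->
    (exists t, 0 <= t /\ v1 = t *: v) /\ (exists t, 0 <= t /\ v2 = t *: v).

Definition dvec (v : 'rV[R]_(m + 1)) : 'rV[R]_p := vhead v *m AR - vlast v *: cR.

Definition rhs (v : 'rV[R]_(m + 1)) (gam : R) : R := (vhead v *m bR) 0 0 - vlast v * gam.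

(* {v^r}_{r in I} contains exactly one representative of each extreme ray of Q,
   each scaled so that d^r is integral. *)
Definition ray_reps (I : finType) (vr : I -> 'rV[R]_(m + 1)) : Prop :=
  (forall r, extreme_ray_gen (vr r)) /\
  (forall r1 r2 (t : R), 0 < t -> vr r1 = t *: vr r2 -> r1 = r2) /\
  (forall v, extreme_ray_gen v -> exists r (t : R), 0 < t /\ v = t *: vr r) /\
  (forall r j, dvec (vr r) 0 j \is a Num.int).

Definition delta (v : 'rV[R]_(m + 1)) (gs : R) : int := Num.floor (rhs v gs) + 1.

End Setting.

From HB Require Import structures.
From mathcomp Require Import all_boot all_order all_algebra.
Import Order.TTheory GRing.Theory Num.Theory.
Local Open Scope ring_scope.

(* Write gs for the optimal value c xs + h ys.  By the
   projection theorem, x lies in the projection of P_gs = P /\ {cx + hy >= gs}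
   exactly when d^r x <= v^r b - v^r_{m+1} gs for every r.
   - Exclusion of the apex: (xs, ys) lies in P_gs, so d^r xs is at most that
     right-hand side, which is strictly below its floor plus one, delta^r.
   - Validity: if an integral x had d^r x < delta^r for every r, then, d^r x
     being an integer, d^r x <= v^r b - v^r_{m+1} gs for every r; so some
     (x, y) in P reaches value gs, hence is the unique maximizer (xs, ys),
     contradicting the non-integrality of xs. *)

Lemma int_mulmx (R : archiNumDomainType) (n : nat)
    (d : 'rV[R]_n) (x : 'cV[R]_n) :
  (forall j, d 0 j \is a Num.int) -> (forall j, x j 0 \is a Num.int) ->
  (d *m x) 0 0 \is a Num.int.
Proof.
by move=> d_int x_int; rewrite mxE; apply: rpred_sum => j _; apply: rpredM.
Qed.

Lemma int_lt_floorD1 (R : archiRealDomainType) (z y : R) :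
  z \is a Num.int -> (z < (Num.floor y + 1)%:~R) = (z <= y).
Proof. by move=> /intrP[n ->]; rewrite ltr_int ltzD1 floor_ge_int. Qed.

Section Disjunction.
Variables (R : archiRealFieldType) (m p q : nat).
Variables (A : 'M[rat]_(m, p)) (G : 'M[rat]_(m, q)) (b : 'cV[rat]_m).
Variables (c : 'rV[rat]_p) (h : 'rV[rat]_q).
Variables (I : finType) (vr : I -> 'rV[R]_(m + 1)).
Variables (xs : 'cV[R]_p) (ys : 'cV[R]_q).

Hypothesis projection : forall (gam : R) (x : 'cV[R]_p),
  (exists y : 'cV[R]_q, inP A G b x y /\ gam <= obj c h x y) <->
  (forall r : I, (dvec A c (vr r) *m x) 0 0 <= rhs b (vr r) gam).

Local Notation gs := (obj c h xs ys).
Local Notation d r := (dvec A c (vr r)).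

Lemma apex_in_projection : inP A G b xs ys ->
  forall r, (d r *m xs) 0 0 <= rhs b (vr r) gs.
Proof. by move=> xsysP; apply/projection; exists ys. Qed.

Lemma disjunction_excludes_apex : inP A G b xs ys ->
  forall r, (d r *m xs) 0 0 < (delta b (vr r) gs)%:~R.
Proof.
by move=> xsysP r; apply: le_lt_trans (floorD1_gt _); apply: apex_in_projection.
Qed.

(* No integral x extends to a point of P of value at least gs: such a point
   would be the unique maximizer, whose x-part is not integral. *)
Lemma no_integral_point_at_optimum :
  unique_maximizer A G b c h xs ys -> ~ (forall j, xs j 0 \is a Num.int) ->
  forall x : 'cV[R]_p, (forall j, x j 0 \is a Num.int) ->
  ~ exists y : 'cV[R]_q, inP A G b x y /\ gs <= obj c h x y.
Proof.
move=> [_ xs_max] xs_nint x x_int [y [xyP gs_le]].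
have [/(congr1 fst) /= x_eq | xy_ne] := eqVneq (x, y) (xs, ys).
  by apply: xs_nint; rewrite -x_eq.
by move: (xs_max x y xyP (elimN eqP xy_ne)); rewrite ltNge gs_le.
Qed.

Lemma disjunction_valid :
  unique_maximizer A G b c h xs ys -> ~ (forall j, xs j 0 \is a Num.int) ->
  (forall r j, d r 0 j \is a Num.int) ->
  forall x : 'cV[R]_p, (forall j, x j 0 \is a Num.int) ->
  exists r : I, (delta b (vr r) gs)%:~R <= (d r *m x) 0 0.
Proof.
move=> xs_max xs_nint d_int x x_int.
have [/existsP // | /existsPn all_below] :=
  boolP [exists r, (delta b (vr r) gs)%:~R <= (d r *m x) 0 0].
exfalso; apply: (no_integral_point_at_optimum xs_max xs_nint _ x_int).
apply/projection => r.
by rewrite -int_lt_floorD1 ?int_mulmx // ltNge all_below.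
Qed.

End Disjunction.

Theorem lemma2p12 (R : archiRealFieldType) (m p q : nat)
  (A : 'M[rat]_(m, p)) (G : 'M[rat]_(m, q)) (b : 'cV[rat]_m)
  (c : 'rV[rat]_p) (h : 'rV[rat]_q)
  (I : finType) (vr : I -> 'rV[R]_(m + 1))
  (xs : 'cV[R]_p) (ys : 'cV[R]_q) :
  ray_reps A G c h vr ->
  (* standing fact of the setting: projection of P_gamma onto x-space *)
  (forall (gam : R) (x : 'cV[R]_p),
     (exists y : 'cV[R]_q, inP A G b x y /\ gam <= obj c h x y) <->
     (forall r : I, (dvec A c (vr r) *m x) 0 0 <= rhs b (vr r) gam)) ->
  translated_cone_apex A G b xs ys ->
  ~ (forall j, xs j 0 \is a Num.int) ->
  unique_maximizer A G b c h xs ys ->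
  let gs := obj c h xs ys in
  (forall x : 'cV[R]_p, (forall j, x j 0 \is a Num.int) ->
     exists r : I, (delta b (vr r) gs)%:~R <= (dvec A c (vr r) *m x) 0 0) /\
  (forall r : I, (dvec A c (vr r) *m xs) 0 0 < (delta b (vr r) gs)%:~R).
Proof.
move=> [_ [_ [_ d_int]]] projection _ xs_nint xs_max gs; split.
- exact: disjunction_valid projection xs_max xs_nint d_int.
- exact: disjunction_excludes_apex projection xs_max.1.
Qed.
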